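(* Let $(A,\mathcal N,\mathcal P,\lambda)$ be a game. Let $A^\perp$ be the event structure with the same events, order and conflict as $A$ but with every polarity reversed. Equip $A^\perp$ with the group $\mathcal N_{A^\perp}:=\mathcal P$ (acting on events as on $A$), the group $\mathcal P_{A^\perp}:=\mathcal N$ (acting on events as on $A$), and the function $\lambda_{A^\perp}:\mathcal P\times\mathcal N\to\mathcal N\times\mathcal P$ defined as the composite $\mathit{isw}\circ\lambda\circ\mathit{isw}$, where $\mathit{isw}$ denotes the invert-and-swap maps $\mathcal P\times\mathcal N\to\mathcal N\times\mathcal P$, $(\beta,\alpha)\mapsto(\alpha^{-1},\beta^{-1})$, and $\mathcal N\times\mathcal P\to\mathcal P\times\mathcal N$, $(\alpha,\beta)\mapsto(\beta^{-1},\alpha^{-1})$. Explicitly, $\lambda_{A^\perp}(\beta,\alpha)=(\alpha'^{-1},\beta'^{-1})$ where $(\beta',\alpha')=\lambda(\alpha^{-1},\beta^{-1})$. Then $(A^\perp,\mathcal P,\mathcal N,\lambda_{A^\perp})$ is a game (the dual of $A$).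
   Context: An event structure (with polarity) is a set $A$ with a partial order $\leq$ such that every element has finitely many elements below it, an irreflexive symmetric relation $\#$ (conflict) that is hereditary (if $a\leq a'$ and $a\# b$ then $a'\# b$), and a polarity function $A\to\{-,+\}$. A configuration is a finite $\leq$-down-closed subset containing no two elements in conflict; $\mathrm{Conf}(A)$ is the set of configurations. For $x,y\in\mathrm{Conf}(A)$, $x\subseteq^+y$ (resp. $x\subseteq^-y$) means $x\subseteq y$ and all elements of $y\setminus x$ are positive (resp. negative). An automorphism of $A$ is a bijection $A\to A$ preserving and reflecting $\leq$, $\#$ and polarity. An automorphism $\alpha$ fixes $x\in\mathrm{Conf}(A)$ if $\alpha(a)=a$ for all $a\in x$. An automorphism $\alpha$ is negative if whenever $\alpha$ fixes $x\in\mathrm{Conf}(A)$ and $x\subseteq^+y\in\mathrm{Conf}(A)$, $\alpha$ fixes $y$; it is positive if the same holds with $\subseteq^-$ in place of $\subseteq^+$. An action of a group $G$ on $A$ is a group homomorphism from $G$ to the automorphism group of $A$ (we write $g(a)$ for the action); it is negative (resp. positive) if every element acts by a negative (resp. positive) automorphism. A game is a tuple $(A,\mathcal N,\mathcal P,\lambda)$ where $A$ is an event structure, $\mathcal N$ is a group with a negative action on $A$, $\mathcal P$ is a group with a positive action on $A$, and $\lambda:\mathcal N\times\mathcal P\to\mathcal P\times\mathcal N$ is a function satisfying, for all $\alpha,\alpha'\in\mathcal N$, $\beta,\beta'\in\mathcal P$ (with $e$ the units): (i) $\lambda(e,\beta)=(\beta,e)$ and $\lambda(\alpha,e)=(e,\alpha)$;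 (ii) if $\lambda(\alpha',\beta)=(\beta_1,\alpha_1)$ and $\lambda(\alpha,\beta_1)=(\beta_2,\alpha_2)$ then $\lambda(\alpha\alpha',\beta)=(\beta_2,\alpha_2\alpha_1)$; (iii) if $\lambda(\alpha,\beta)=(\beta_1,\alpha_1)$ and $\lambda(\alpha_1,\beta')=(\beta_2,\alpha_2)$ then $\lambda(\alpha,\beta\beta')=(\beta_1\beta_2,\alpha_2)$; (iv) if $\lambda(\alpha,\beta)=(\beta',\alpha')$ then $\alpha(\beta(a))=\beta'(\alpha'(a))$ for all $a\in A$. (Conditions (i)–(iii) say $\lambda$ is a distributive law between the monads $\mathcal N\times(-)$ and $\mathcal P\times(-)$ on $\mathbf{Set}$.) *)

From Stdlib Require Import List.



Inductive polarity := Neg | Pos.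
Definition flip (p : polarity) : polarity := match p with Neg => Pos | Pos => Neg end.

Record Group := {
  gcar :> Type;
  gmul : gcar -> gcar -> gcar;
  gone : gcar;
  ginv : gcar -> gcar;
  gmulA : forall x y z, gmul x (gmul y z) = gmul (gmul x y) z;
  gmul1l : forall x, gmul gone x = x;
  gmul1r : forall x, gmul x gone = x;
  gmulVl : forall x, gmul (ginv x) x = gone;
  gmulVr : forall x, gmul x (ginv x) = gone
}.
Arguments gmul {g}.
Arguments gone {g}.
Arguments ginv {g}.

Record ESdata := {
  ev : Type;
  leq_ev : ev -> ev -> Prop;
  cf : ev -> ev -> Prop;
  pol : ev -> polarity
}.

Definition is_event_structure (A : ESdata) : Prop :=
  (forall a, leq_ev A a a) /\
  (forall a b, leq_ev A a b -> leq_ev A b a -> a = b) /\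
  (forall a b c, leq_ev A a b -> leq_ev A b c -> leq_ev A a c) /\
  (forall a, exists l : list (ev A), forall b, leq_ev A b a <-> In b l) /\
  (forall a, ~ cf A a a) /\
  (forall a b, cf A a b -> cf A b a) /\
  (forall a a' b, leq_ev A a a' -> cf A a b -> cf A a' b).

Definition dual (A : ESdata) : ESdata :=
  {| ev := ev A; leq_ev := leq_ev A; cf := cf A; pol := fun a => flip (pol A a) |}.

Definition is_config (A : ESdata) (x : ev A -> Prop) : Prop :=
  (exists l : list (ev A), forall a, x a <-> In a l) /\
  (forall a b, leq_ev A a b -> x b -> x a) /\
  (forall a b, x a -> x b -> ~ cf A a b).

Definition subset_pol (A : ESdata) (p : polarity) (x y : ev A -> Prop) : Prop :=
  (forall a, x a -> y a) /\ (forall a, y a -> ~ x a -> pol A a = p).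

Definition is_automorphism (A : ESdata) (f : ev A -> ev A) : Prop :=
  (forall a b, f a = f b -> a = b) /\
  (forall b, exists a, f a = b) /\
  (forall a b, leq_ev A a b <-> leq_ev A (f a) (f b)) /\
  (forall a b, cf A a b <-> cf A (f a) (f b)) /\
  (forall a, pol A (f a) = pol A a).

Definition fixes (A : ESdata) (f : ev A -> ev A) (x : ev A -> Prop) : Prop :=
  forall a, x a -> f a = a.

Definition auto_closed (A : ESdata) (p : polarity) (f : ev A -> ev A) : Prop :=
  is_automorphism A f /\
  forall x y, is_config A x -> is_config A y ->
    fixes A f x -> subset_pol A p x y -> fixes A f y.

Definition negative_automorphism (A : ESdata) (f : ev A -> ev A) : Prop :=
  auto_closed A Pos f.
Definition positive_automorphism (A : ESdata) (f : ev A -> ev A) : Prop :=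
  auto_closed A Neg f.

Definition is_action (A : ESdata) (G : Group) (act : G -> ev A -> ev A) : Prop :=
  (forall g, is_automorphism A (act g)) /\
  (forall a, act gone a = a) /\
  (forall g h a, act (gmul g h) a = act g (act h a)).

Definition negative_action (A : ESdata) (G : Group) (act : G -> ev A -> ev A) : Prop :=
  is_action A G act /\ forall g, negative_automorphism A (act g).
Definition positive_action (A : ESdata) (G : Group) (act : G -> ev A -> ev A) : Prop :=
  is_action A G act /\ forall g, positive_automorphism A (act g).

Definition is_game (A : ESdata) (N P : Group)
    (actN : N -> ev A -> ev A) (actP : P -> ev A -> ev A)
    (lam : N * P -> P * N) : Prop :=
  is_event_structure A /\
  negative_action A N actN /\
  positive_action A P actP /\
  (forall b : P, lam (gone, b) = (b, gone)) /\
  (forall a : N, lam (a, gone) = (gone, a)) /\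
  (forall (a a' : N) (b : P) b1 a1 b2 a2,
     lam (a', b) = (b1, a1) -> lam (a, b1) = (b2, a2) ->
     lam (gmul a a', b) = (b2, gmul a2 a1)) /\
  (forall (a : N) (b b' : P) b1 a1 b2 a2,
     lam (a, b) = (b1, a1) -> lam (a1, b') = (b2, a2) ->
     lam (a, gmul b b') = (gmul b1 b2, a2)) /\
  (forall (a : N) (b : P) b' a',
     lam (a, b) = (b', a') -> forall e, actN a (actP b e) = actP b' (actN a' e)).

Definition isw {G H : Group} (p : G * H) : H * G :=
  (ginv (snd p), ginv (fst p)).

Definition dual_lambda (N P : Group) (lam : N * P -> P * N) : P * N -> N * P :=
  fun p => isw (lam (isw p)).


(* Reversing polarities exchanges [subset_pol _ Pos] and [subset_pol _ Neg],
   so the negative automorphisms of A are the positive automorphisms of its dual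
   and vice versa.  Invert-and-swap is an involutive anti-homomorphism, hence
   conjugating lam by it preserves the unit laws (i) and exchanges the
   multiplicativity laws (ii) and (iii); the dual law (iv) is law (iv) of lam at
   the inverse elements, after cancelling the actions. *)

Section GroupTheory.

Variable G : Group.

Lemma ginv_unique (x y : G) : gmul x y = gone -> y = ginv x.
Proof.
  intro E.
  rewrite <- (gmul1l G y), <- (gmulVl G x), <- gmulA, E, gmul1r.
  reflexivity.
Qed.

Lemma ginv1 : ginv (gone : G) = gone.
Proof. symmetry. apply ginv_unique, gmul1l. Qed.

Lemma ginvK (x : G) : ginv (ginv x) = x.
Proof. symmetry. apply ginv_unique, gmulVl. Qed.

Lemma ginvM (x y : G) : ginv (gmul x y) = gmul (ginv y) (ginv x).
Proof.
  symmetry. apply ginv_unique.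
  rewrite <- gmulA, (gmulA G y), gmulVr, gmul1l, gmulVr.
  reflexivity.
Qed.

End GroupTheory.

Section Actions.

Variables (A : ESdata) (G : Group) (act : G -> ev A -> ev A).
Hypothesis act_is_action : is_action A G act.

Lemma act_invl (g : G) (x : ev A) : act (ginv g) (act g x) = x.
Proof.
  destruct act_is_action as (_ & act1 & actM).
  rewrite <- actM, gmulVl. apply act1.
Qed.

Lemma act_invr (g : G) (x : ev A) : act g (act (ginv g) x) = x.
Proof.
  destruct act_is_action as (_ & act1 & actM).
  rewrite <- actM, gmulVr. apply act1.
Qed.

End Actions.

Lemma flip_eq (p q : polarity) : flip q = p -> q = flip p.
Proof. destruct p, q; simpl; congruence. Qed.

Lemma dual_automorphism (A : ESdata) (f : ev A -> ev A) :
  is_automorphism A f -> is_automorphism (dual A) f.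
Proof.
  intros (f_inj & f_surj & f_leq & f_cf & f_pol).
  repeat split; auto; try apply f_leq; try apply f_cf.
  intro a. simpl. rewrite f_pol. reflexivity.
Qed.

Lemma subset_pol_dual (A : ESdata) (p : polarity) (x y : ev A -> Prop) :
  subset_pol (dual A) p x y -> subset_pol A (flip p) x y.
Proof.
  intros [xy pol_yx]. split; [exact xy |].
  intros a ya not_xa. apply flip_eq, (pol_yx a ya not_xa).
Qed.

Lemma dual_auto_closed (A : ESdata) (p : polarity) (f : ev A -> ev A) :
  auto_closed A (flip p) f -> auto_closed (dual A) p f.
Proof.
  intros [f_auto f_closed]. split; [exact (dual_automorphism A f f_auto) |].
  intros x y x_conf y_conf f_fixes xy.
  exact (f_closed x y x_conf y_conf f_fixes (subset_pol_dual A p x y xy)).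
Qed.

Lemma dual_action (A : ESdata) (G : Group) (act : G -> ev A -> ev A) :
  is_action A G act -> is_action (dual A) G act.
Proof.
  intros (act_auto & act1 & actM).
  split; [intro g; apply dual_automorphism, act_auto | split; [exact act1 | exact actM]].
Qed.

Lemma dual_negative_action (A : ESdata) (G : Group) (act : G -> ev A -> ev A) :
  positive_action A G act -> negative_action (dual A) G act.
Proof.
  intros [act_action act_pos]. split.
  - exact (dual_action A G act act_action).
  - intro g. exact (dual_auto_closed A Pos (act g) (act_pos g)).
Qed.

Lemma dual_positive_action (A : ESdata) (G : Group) (act : G -> ev A -> ev A) :
  negative_action A G act -> positive_action (dual A) G act.
Proof.
  intros [act_action act_neg]. split.
  - exact (dual_action A G act act_action).
  - intro g. exact (dual_auto_closed A Neg (act g) (act_neg g)).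
Qed.

Section DualLambda.

Variables (N P : Group) (lam : N * P -> P * N).

Lemma dual_lambda_eq (a : P) (b : N) (b' : N) (a' : P) :
  dual_lambda N P lam (a, b) = (b', a') <->
  lam (ginv b, ginv a) = (ginv a', ginv b').
Proof.
  unfold dual_lambda, isw. simpl.
  destruct (lam (ginv b, ginv a)) as [a0 b0]. simpl.
  split; intro E; injection E as E1 E2; subst; rewrite !ginvK; reflexivity.
Qed.

Lemma dual_lambda_unit_l :
  (forall b : N, lam (b, gone) = (gone, b)) ->
  forall b : N, dual_lambda N P lam (gone, b) = (b, gone).
Proof. intros lam_unit b. apply dual_lambda_eq. rewrite !ginv1. apply lam_unit. Qed.

Lemma dual_lambda_unit_r :
  (forall a : P, lam (gone, a) = (a, gone)) ->
  forall a : P, dual_lambda N P lam (a, gone) = (gone, a).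
Proof. intros lam_unit a. apply dual_lambda_eq. rewrite !ginv1. apply lam_unit. Qed.

Lemma dual_lambda_mul_l :
  (forall (b : N) (a a' : P) a1 b1 a2 b2,
     lam (b, a) = (a1, b1) -> lam (b1, a') = (a2, b2) ->
     lam (b, gmul a a') = (gmul a1 a2, b2)) ->
  forall (a a' : P) (b : N) b1 a1 b2 a2,
    dual_lambda N P lam (a', b) = (b1, a1) ->
    dual_lambda N P lam (a, b1) = (b2, a2) ->
    dual_lambda N P lam (gmul a a', b) = (b2, gmul a2 a1).
Proof.
  intros lam_mul a a' b b1 a1 b2 a2 E1 E2.
  apply dual_lambda_eq in E1, E2. apply dual_lambda_eq.
  rewrite !ginvM. exact (lam_mul _ _ _ _ _ _ _ E1 E2).
Qed.

Lemma dual_lambda_mul_r :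
  (forall (b b' : N) (a : P) a1 b1 a2 b2,
     lam (b', a) = (a1, b1) -> lam (b, a1) = (a2, b2) ->
     lam (gmul b b', a) = (a2, gmul b2 b1)) ->
  forall (a : P) (b b' : N) b1 a1 b2 a2,
    dual_lambda N P lam (a, b) = (b1, a1) ->
    dual_lambda N P lam (a1, b') = (b2, a2) ->
    dual_lambda N P lam (a, gmul b b') = (gmul b1 b2, a2).
Proof.
  intros lam_mul a b b' b1 a1 b2 a2 E1 E2.
  apply dual_lambda_eq in E1, E2. apply dual_lambda_eq.
  rewrite !ginvM. exact (lam_mul _ _ _ _ _ _ _ E1 E2).
Qed.

Lemma dual_lambda_act (A : ESdata)
    (actN : N -> ev A -> ev A) (actP : P -> ev A -> ev A) :
  is_action A N actN -> is_action A P actP ->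
  (forall (b : N) (a : P) a' b',
     lam (b, a) = (a', b') -> forall e, actN b (actP a e) = actP a' (actN b' e)) ->
  forall (a : P) (b : N) b' a',
    dual_lambda N P lam (a, b) = (b', a') ->
    forall e, actP a (actN b e) = actN b' (actP a' e).
Proof.
  intros actN_action actP_action lam_act a b b' a' E e.
  apply dual_lambda_eq in E.
  pose proof (lam_act _ _ _ _ E (actN b' (actP a' e))) as K.
  rewrite (act_invl A N actN actN_action), (act_invl A P actP actP_action) in K.
  rewrite <- K at 1. rewrite (act_invr A N actN actN_action), (act_invr A P actP actP_action).
  reflexivity.
Qed.

End DualLambda.

Theorem mainTheorem1 (A : ESdata) (N P : Group)
    (actN : N -> ev A -> ev A) (actP : P -> ev A -> ev A)
    (lam : N * P -> P * N) :
  is_game A N P actN actP lam ->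
  is_game (dual A) P N actP actN (dual_lambda N P lam).
Proof.
  intros (A_es & actN_neg & actP_pos & lam_unit_l & lam_unit_r
          & lam_mul_l & lam_mul_r & lam_act).
  split; [exact A_es |].
  split; [exact (dual_negative_action A P actP actP_pos) |].
  split; [exact (dual_positive_action A N actN actN_neg) |].
  split; [exact (dual_lambda_unit_l N P lam lam_unit_r) |].
  split; [exact (dual_lambda_unit_r N P lam lam_unit_l) |].
  split; [exact (dual_lambda_mul_l N P lam lam_mul_r) |].
  split; [exact (dual_lambda_mul_r N P lam lam_mul_l) |].
  exact (dual_lambda_act N P lam A actN actP (proj1 actN_neg) (proj1 actP_pos) lam_act).
Qed.
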